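(* Let $T>0$, let $(\pi_n)$ be a sequence of regular partitions of $[0,T]$, i.e. $t^n_k=kT/N_n$ for $k=0,\dots,N_n$ with $(N_n)$ strictly increasing natural numbers, and let $X=\{X(t)\colon t\in[0,T]\}$ be a mean zero second order process satisfying (C1) and (C2) with constants $\gamma\in(0,1)$, $\kappa>0$. Then $$\mathbb{E}V^{(2)}_{N_n}(X,2)\longrightarrow\kappa^2(4-2^{2\gamma})T\qquad(n\to\infty),$$ where $V^{(2)}_{N_n}(X,2)=(T^{-1}N_n)^{2\gamma-1}\sum_{k=1}^{N_n-1}\big(X(t^n_{k+1})-2X(t^n_k)+X(t^n_{k-1})\big)^2$.
   Context: $\sigma_X^2(s,t)=\mathbb{E}[X(t)-X(s)]^2$. $\Psi$ is the class of continuous $\varphi\colon(0,T]\to[0,\infty)$ with $\varphi(h)\to0$, $L(h):=\varphi(h)/h\to\infty$, $hL(h)^3\to0$ as $h\downarrow0$. (C1): $\sigma_X(0,\delta)=O(\delta^\gamma)$ as $\delta\downarrow0$. (C2): for every $\varphi\in\Psi$, $\sup_{\varphi(\delta)\le t\le T-\delta}\sup_{0<h\le\delta}|\sigma_X(t,t+h)/(\kappa h^\gamma)-1|\to0$ as $\delta\downarrow0$. *)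

From Stdlib Require Import Reals Lra List.
Open Scope R_scope.

(* A mean-zero second order process X on [0,T] is represented by its
   covariance kernel K s t = E[X(s) X(t)], which is exactly the data
   determining all second moments of finite linear combinations. *)

(* E[(sum_i c_i X(t_i))^2] for the linear combination given as a list
   of (coefficient, time) pairs. *)
Definition sec_mom (K : R -> R -> R) (l : list (R * R)) : R :=
  fold_right Rplus 0
    (map (fun p => fold_right Rplus 0
            (map (fun q => fst p * fst q * K (snd p) (snd q)) l)) l).

Definition is_covariance (T : R) (K : R -> R -> R) : Prop :=
  (forall s t, 0 <= s <= T -> 0 <= t <= T -> K s t = K t s) /\
  (forall l : list (R * R),
      (forall p, In p l -> 0 <= snd p <= T) -> 0 <= sec_mom K l).

Definition sigma2 (K : R -> R -> R) (s t : R) : R :=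
  sec_mom K ((1, t) :: (-1, s) :: nil).
Definition sigma (K : R -> R -> R) (s t : R) : R := sqrt (sigma2 K s t).

Definition in_Psi (T : R) (phi : R -> R) : Prop :=
  (forall x, 0 < x <= T -> forall eps, eps > 0 -> exists d, d > 0 /\
      forall y, 0 < y <= T -> Rabs (y - x) < d -> Rabs (phi y - phi x) < eps) /\
  (forall h, 0 < h <= T -> 0 <= phi h) /\
  (forall eps, eps > 0 -> exists d, d > 0 /\
      forall h, 0 < h <= T -> h < d -> Rabs (phi h) < eps) /\
  (forall M, exists d, d > 0 /\
      forall h, 0 < h <= T -> h < d -> phi h / h > M) /\
  (forall eps, eps > 0 -> exists d, d > 0 /\
      forall h, 0 < h <= T -> h < d -> Rabs (h * (phi h / h) ^ 3) < eps).

Definition cond_C1 (T gamma : R) (K : R -> R -> R) : Prop :=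
  exists C d0, d0 > 0 /\
    forall delta, 0 < delta <= T -> delta < d0 ->
      sigma K 0 delta <= C * Rpower delta gamma.

Definition cond_C2 (T gamma kappa : R) (K : R -> R -> R) : Prop :=
  forall phi, in_Psi T phi ->
    forall eps, eps > 0 -> exists d0, d0 > 0 /\
      forall delta, 0 < delta <= T -> delta < d0 ->
        forall t h, phi delta <= t <= T - delta -> 0 < h <= delta ->
          Rabs (sigma K t (t + h) / (kappa * Rpower h gamma) - 1) <= eps.

Definition EV2 (T gamma : R) (K : R -> R -> R) (N : nat) : R :=
  let tk := fun k : nat => INR k * T / INR N in
  Rpower (INR N / T) (2 * gamma - 1) *
  fold_right Rplus 0
    (map (fun k => sec_mom K ((1, tk (S k)) :: (-2, tk k) :: (1, tk (pred k)) :: nil))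
         (seq 1 (N - 1))).

(* Write h = T/N for the mesh, u = h^(2 gamma), and D(a,b,c) for the second
   moment of X(a) - 2 X(b) + X(c).  By polarisation
     D(b+h, b, b-h) = 2 sigma^2(b,b+h) + 2 sigma^2(b-h,b) - sigma^2(b-h,b+h).
   Away from the origin, namely for b - h >= phi(2h) with the weight
   phi(x) = x^(3/4) of the class Psi, condition (C2) gives the three increments
   as kappa^2 u, kappa^2 u and kappa^2 2^(2 gamma) u up to a relative error e,
   so such a term equals kappa^2 (4 - 2^(2 gamma)) u up to 24 kappa^2 e u.
   The first K0 ~ h^(-1/4) terms, near the origin, are only bounded through (C1)
   by O((K0 h)^(2 gamma)).  As the prefactor (N/T)^(2 gamma - 1) equals h/u, the
   bulk contributes kappa^2 (4 - 2^(2 gamma)) T + O(e T) and the boundary terms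
   O(h K0^3) = O(h^(1/4)). *)

From Stdlib Require Import Reals Lra Lia List ZArith.
Open Scope R_scope.

(* The fourth root; phi34 x = x^(3/4) is the element of Psi used with (C2). *)
Definition root4 (x : R) : R := sqrt (sqrt x).

Lemma root4_nonneg x : 0 <= root4 x.
Proof. apply sqrt_pos. Qed.

Lemma root4_pos x : 0 < x -> 0 < root4 x.
Proof. intros Hx; apply sqrt_lt_R0, sqrt_lt_R0; exact Hx. Qed.

Lemma root4_pow4 x : 0 <= x -> root4 x ^ 4 = x.
Proof.
  intros Hx; unfold root4.
  replace (sqrt (sqrt x) ^ 4) with ((sqrt (sqrt x) ^ 2) ^ 2) by ring.
  rewrite pow2_sqrt by apply sqrt_pos. exact (pow2_sqrt x Hx).
Qed.

Lemma root4_le x y : x <= y -> root4 x <= root4 y.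
Proof. intros; apply sqrt_le_1_alt, sqrt_le_1_alt; assumption. Qed.

Lemma root4_lt x e : 0 <= x -> 0 < e -> x < e ^ 4 -> root4 x < e.
Proof.
  intros Hx He Hxe. destruct (Rlt_or_le (root4 x) e) as [Hlt | Hge]; [exact Hlt |].
  assert (Hpow : e ^ 4 <= root4 x ^ 4) by (apply pow_incr; lra).
  rewrite root4_pow4 in Hpow by exact Hx. lra.
Qed.

Lemma root4_continuous x : 0 < x -> continuity_pt root4 x.
Proof.
  intros Hx. apply (continuity_pt_comp sqrt sqrt x).
  - apply continuity_pt_sqrt; lra.
  - apply continuity_pt_sqrt, sqrt_pos.
Qed.

Lemma continuity_pt_eps f x : continuity_pt f x ->
  forall eps, eps > 0 -> exists d, d > 0 /\
    forall y, Rabs (y - x) < d -> Rabs (f y - f x) < eps.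
Proof.
  intros Hf eps Heps. destruct (Hf eps Heps) as [d [Hd Hclose]].
  exists d; split; [exact Hd |]. intros y Hy.
  destruct (Req_dec y x) as [-> | Hne].
  - unfold Rminus; rewrite Rplus_opp_r, Rabs_R0; exact Heps.
  - apply (Hclose y). split; [split; [exact I | auto] | exact Hy].
Qed.

Definition phi34 (x : R) : R := root4 x ^ 3.

Lemma phi34_le x y : x <= y -> phi34 x <= phi34 y.
Proof.
  intros; unfold phi34; apply pow_incr; split; [apply root4_nonneg | apply root4_le; auto].
Qed.

Lemma phi34_ratio h : 0 < h -> phi34 h / h = / root4 h.
Proof.
  intros Hh. pose proof (root4_pos h Hh).
  unfold phi34. rewrite <- (root4_pow4 h) at 2 by lra. field; lra.
Qed.

Lemma phi34_in_Psi T : in_Psi T phi34.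
Proof.
  split; [| split; [| split; [| split]]].
  - intros x Hx eps Heps.
    pose proof (root4_continuous x (proj1 Hx)) as Hr.
    assert (Hc : continuity_pt (fun y => root4 y * (root4 y * root4 y)) x)
      by (apply continuity_pt_mult; [| apply continuity_pt_mult]; exact Hr).
    destruct (continuity_pt_eps _ _ Hc eps Heps) as [d [Hd Hclose]].
    exists d; split; [exact Hd |]. intros y _ Hy.
    unfold phi34; simpl; rewrite !Rmult_1_r. exact (Hclose y Hy).
  - intros h _. apply pow_le, root4_nonneg.
  - intros eps Heps. set (e := Rmin eps 1).
    assert (He : 0 < e) by (apply Rmin_glb_lt; lra).
    assert (He1 : e <= 1) by apply Rmin_r. assert (Hee : e <= eps) by apply Rmin_l.
    exists (e ^ 4). split; [apply pow_lt; exact He |].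
    intros h Hh Hsmall. pose proof (root4_lt h e ltac:(lra) He Hsmall).
    pose proof (root4_nonneg h). unfold phi34.
    rewrite Rabs_right by (apply Rle_ge, pow_le; lra).
    assert (root4 h ^ 3 <= root4 h) by (simpl; nra). lra.
  - intros M. set (e := / (Rabs M + 1)).
    assert (He : 0 < e) by (apply Rinv_0_lt_compat; pose proof (Rabs_pos M); lra).
    exists (e ^ 4). split; [apply pow_lt; exact He |].
    intros h Hh Hsmall. rewrite phi34_ratio by lra.
    pose proof (root4_lt h e ltac:(lra) He Hsmall). pose proof (root4_pos h ltac:(lra)).
    assert (/ e <= / root4 h) by (apply Rinv_le_contravar; lra).
    unfold e in *. rewrite Rinv_inv in *. pose proof (Rle_abs M). lra.
  - intros eps Heps. exists (eps ^ 4). split; [apply pow_lt; exact Heps |].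
    intros h Hh Hsmall. rewrite phi34_ratio by lra.
    pose proof (root4_lt h eps ltac:(lra) Heps Hsmall). pose proof (root4_pos h ltac:(lra)).
    replace (h * (/ root4 h) ^ 3) with (root4 h)
      by (rewrite <- (root4_pow4 h) at 2 by lra; field; lra).
    rewrite Rabs_right; lra.
Qed.

Definition second_diff (K : R -> R -> R) (a b c : R) : R :=
  sec_mom K ((1, a) :: (-2, b) :: (1, c) :: nil).

(* Proves that every time point of an explicit list lies in [0,T]. *)
Ltac in_list := let H := fresh in
  simpl; intros ? H; repeat (destruct H as [<- | H]; [simpl; lra |]); destruct H.

Section Covariance.

Variables (T : R) (K : R -> R -> R).
Hypothesis HK : is_covariance T K.

Lemma sigma2_nonneg s t : 0 <= s <= T -> 0 <= t <= T -> 0 <= sigma2 K s t.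
Proof. intros Hs Ht. apply (proj2 HK). in_list. Qed.

Lemma sigma_sq s t : 0 <= s <= T -> 0 <= t <= T -> sigma K s t ^ 2 = sigma2 K s t.
Proof. intros Hs Ht. apply pow2_sqrt, sigma2_nonneg; assumption. Qed.

Lemma second_diff_polarization a b c : 0 <= a <= T -> 0 <= b <= T -> 0 <= c <= T ->
  second_diff K a b c = 2 * sigma2 K b a + 2 * sigma2 K c b - sigma2 K c a.
Proof.
  intros Ha Hb Hc. destruct HK as [Hsym _]. unfold second_diff, sigma2, sec_mom; simpl.
  pose proof (Hsym a b Ha Hb). pose proof (Hsym a c Ha Hc). pose proof (Hsym b c Hb Hc). lra.
Qed.

Lemma second_diff_nonneg a b c : 0 <= a <= T -> 0 <= b <= T -> 0 <= c <= T ->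
  0 <= second_diff K a b c.
Proof. intros Ha Hb Hc. apply (proj2 HK). in_list. Qed.

(* Crude bound by variances of increments from the origin, used near t = 0:
   it follows from positivity of the second moments of
   X(a) + X(b) - 2 X(0), X(b) + X(c) - 2 X(0) and X(a) - X(c). *)
Lemma second_diff_le_origin a b c : 0 <= a <= T -> 0 <= b <= T -> 0 <= c <= T ->
  second_diff K a b c <= 4 * (sigma2 K 0 a + 2 * sigma2 K 0 b + sigma2 K 0 c).
Proof.
  intros Ha Hb Hc. destruct HK as [Hsym Hpsd].
  assert (H0T : 0 <= 0 <= T) by lra.
  assert (P1 : 0 <= sec_mom K ((1, a) :: (1, b) :: (-2, 0) :: nil)) by (apply Hpsd; in_list).
  assert (P2 : 0 <= sec_mom K ((1, b) :: (1, c) :: (-2, 0) :: nil)) by (apply Hpsd; in_list).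
  assert (P3 : 0 <= sec_mom K ((1, a) :: (-1, c) :: nil)) by (apply Hpsd; in_list).
  unfold second_diff, sigma2, sec_mom in *; simpl in *.
  pose proof (Hsym a b Ha Hb). pose proof (Hsym a c Ha Hc). pose proof (Hsym b c Hb Hc).
  pose proof (Hsym a 0 Ha H0T). pose proof (Hsym b 0 Hb H0T). pose proof (Hsym c 0 Hc H0T).
  lra.
Qed.

End Covariance.

Definition c1_window (T g C d1 : R) (K : R -> R -> R) : Prop :=
  forall delta, 0 < delta <= T -> delta < d1 -> sigma K 0 delta <= C * Rpower delta g.

Definition c2_window (T g kappa : R) (phi : R -> R) (e d0 : R) (K : R -> R -> R) : Prop :=
  forall delta, 0 < delta <= T -> delta < d0 ->
    forall t h, phi delta <= t <= T - delta -> 0 < h <= delta ->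
      Rabs (sigma K t (t + h) / (kappa * Rpower h g) - 1) <= e.

Lemma Rpower_pos x g : 0 < Rpower x g.
Proof. apply exp_pos. Qed.

Lemma Rpower_sq x g : Rpower x g ^ 2 = Rpower x (2 * g).
Proof. replace (2 * g) with (g + g) by ring. rewrite Rpower_plus. ring. Qed.

Lemma sigma2_origin_bound T g C d1 K t B :
  is_covariance T K -> 0 < g ->
  c1_window T g C d1 K ->
  0 <= t <= T -> t <= B -> B < d1 -> sigma2 K 0 t <= C ^ 2 * Rpower B (2 * g).
Proof.
  intros HK Hg HC1 Ht HtB HBd.
  assert (HC : 0 <= C ^ 2) by apply pow2_ge_0.
  destruct (Req_dec t 0) as [-> | Hne].
  - replace (sigma2 K 0 0) with 0 by (unfold sigma2, sec_mom; simpl; ring).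
    pose proof (Rpower_pos B (2 * g)). nra.
  - assert (Hsig : 0 <= sigma K 0 t <= C * Rpower t g)
      by (split; [apply sqrt_pos | apply HC1; lra]).
    rewrite <- (sigma_sq T K HK) by lra.
    assert (Hsq : sigma K 0 t ^ 2 <= (C * Rpower t g) ^ 2) by (apply pow_incr; exact Hsig).
    rewrite Rpow_mult_distr, Rpower_sq in Hsq.
    assert (Rpower t (2 * g) <= Rpower B (2 * g)) by (apply Rle_Rpower_l; lra). nra.
Qed.

Lemma Rabs_le_inv x a : Rabs x <= a -> - a <= x <= a.
Proof.
  intros H. pose proof (Rle_abs x). pose proof (Rle_abs (- x)).
  rewrite Rabs_Ropp in *. lra.
Qed.

Lemma sq_rel_error s m e : 0 < m -> 0 <= s -> Rabs (s / m - 1) <= e -> e <= 1 ->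
  Rabs (s ^ 2 - m ^ 2) <= 3 * e * m ^ 2.
Proof.
  intros Hm Hs Hrel He. set (w := s / m - 1) in *.
  replace s with (m * (1 + w)) by (unfold w; field; lra).
  apply Rabs_le_inv in Hrel. apply Rabs_le.
  replace ((m * (1 + w)) ^ 2 - m ^ 2) with (m ^ 2 * (2 * w + w * w)) by ring.
  assert (Hww : 0 <= w * w <= e) by nra.
  assert (0 < m ^ 2) by nra. split; nra.
Qed.

Lemma sigma2_increment_approx T g kappa e phi delta K t h :
  is_covariance T K -> 0 < kappa -> e <= 1 ->
  (forall t h, phi delta <= t <= T - delta -> 0 < h <= delta ->
     Rabs (sigma K t (t + h) / (kappa * Rpower h g) - 1) <= e) ->
  phi delta <= t <= T - delta -> 0 < h <= delta -> 0 <= t ->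
  Rabs (sigma2 K t (t + h) - kappa ^ 2 * Rpower h (2 * g))
    <= 3 * e * (kappa ^ 2 * Rpower h (2 * g)).
Proof.
  intros HK Hk He HC2 Ht Hh Ht0.
  assert (Hm : 0 < kappa * Rpower h g) by (apply Rmult_lt_0_compat; [lra | apply Rpower_pos]).
  pose proof (sq_rel_error (sigma K t (t + h)) _ _ Hm (sqrt_pos _) (HC2 t h Ht Hh) He) as Hsq.
  rewrite (sigma_sq T K HK), Rpow_mult_distr, Rpower_sq in Hsq by lra. exact Hsq.
Qed.

Lemma dilation_constant_bounds g : 0 < g < 1 -> 0 < 4 - Rpower 2 (2 * g) <= 4.
Proof.
  intros Hg. pose proof (Rpower_pos 2 (2 * g)).
  assert (Hlt : Rpower 2 (2 * g) < Rpower 2 (INR 2)) by (apply Rpower_lt; simpl; lra).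
  rewrite Rpower_pow in Hlt by lra. simpl in Hlt. lra.
Qed.

Lemma Rpower_le_sq x g : 1 <= x -> 0 < g < 1 -> Rpower x (2 * g) <= x ^ 2.
Proof.
  intros Hx Hg. rewrite <- Rpower_pow by lra. apply Rle_Rpower; [exact Hx | simpl; lra].
Qed.

Lemma prefactor_scaling T g N : 0 < T -> (0 < N)%nat ->
  Rpower (INR N / T) (2 * g - 1) * Rpower (T / INR N) (2 * g) = T / INR N.
Proof.
  intros HT HN. assert (0 < INR N) by (apply lt_0_INR; exact HN).
  assert (Hh : 0 < T / INR N) by (apply Rdiv_lt_0_compat; assumption).
  unfold Rpower. rewrite <- exp_plus.
  replace (INR N / T) with (/ (T / INR N)) by (field; lra).
  rewrite ln_Rinv by exact Hh.
  replace ((2 * g - 1) * - ln (T / INR N) + 2 * g * ln (T / INR N)) with (ln (T / INR N))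
    by ring.
  apply exp_ln; exact Hh.
Qed.

Lemma fold_right_map_scale a (f : nat -> R) (l : list nat) :
  fold_right Rplus 0 (map (fun k => a * f k) l) = a * fold_right Rplus 0 (map f l).
Proof. induction l as [| k l IH]; simpl; [ring | rewrite IH; ring]. Qed.

Lemma sum_deviation_bound (f : nat -> R) (c e A : R) (K0 : nat) : 0 <= e -> 0 <= A ->
  forall n s,
  (forall k, (s <= k < s + n)%nat -> (K0 <= k)%nat -> Rabs (f k - c) <= e) ->
  (forall k, (s <= k < s + n)%nat -> (k < K0)%nat -> Rabs (f k - c) <= A) ->
  Rabs (fold_right Rplus 0 (map f (seq s n)) - INR n * c) <= INR n * e + A * INR (K0 - s).
Proof.
  intros He HA n. induction n as [| n IH]; intros s Hbulk Hbdry.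
  - simpl. replace (0 - 0 * c) with 0 by ring. rewrite Rabs_R0.
    pose proof (pos_INR (K0 - s)). nra.
  - simpl map; simpl fold_right. rewrite S_INR.
    specialize (IH (S s) ltac:(intros; apply Hbulk; lia) ltac:(intros; apply Hbdry; lia)).
    replace (f s + fold_right Rplus 0 (map f (seq (S s) n)) - (INR n + 1) * c)
      with ((f s - c) + (fold_right Rplus 0 (map f (seq (S s) n)) - INR n * c)) by ring.
    eapply Rle_trans; [apply Rabs_triang |].
    destruct (Nat.lt_ge_cases s K0) as [Hs | Hs].
    + pose proof (Hbdry s ltac:(lia) Hs).
      replace (K0 - s)%nat with (S (K0 - S s)) by lia. rewrite S_INR. lra.
    + pose proof (Hbulk s ltac:(lia) Hs).
      replace (K0 - s)%nat with 0%nat by lia. replace (K0 - S s)%nat with 0%nat in IH by lia.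
      simpl in *. lra.
Qed.

Lemma partition_term K T N k : (1 <= k)%nat -> INR N <> 0 ->
  second_diff K (INR (S k) * T / INR N) (INR k * T / INR N) (INR (pred k) * T / INR N)
  = second_diff K (INR k * (T / INR N) + T / INR N) (INR k * (T / INR N))
                  (INR k * (T / INR N) - T / INR N).
Proof.
  intros Hk HN. destruct k as [| k]; [lia |]. simpl pred. rewrite !S_INR.
  f_equal; field; exact HN.
Qed.

Lemma bulk_term T g kappa e d0 K h b :
  is_covariance T K -> 0 < g < 1 -> 0 < kappa -> 0 <= e <= 1 ->
  c2_window T g kappa phi34 e d0 K ->
  0 < h -> 2 * h <= T -> 2 * h < d0 -> phi34 (2 * h) <= b - h -> b + h <= T ->
  Rabs (second_diff K (b + h) b (b - h) - kappa ^ 2 * (4 - Rpower 2 (2 * g)) * Rpower h (2 * g))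
    <= 24 * kappa ^ 2 * e * Rpower h (2 * g).
Proof.
  intros HK Hg Hk He HC2 Hh H2h Hd0 Hphi Hb.
  assert (Hphi1 : phi34 h <= phi34 (2 * h)) by (apply phi34_le; lra).
  assert (Hphi0 : 0 <= phi34 h) by apply pow_le, root4_nonneg.
  assert (S1 := sigma2_increment_approx T g kappa e phi34 h K b h HK Hk ltac:(lra)
                  (HC2 h ltac:(lra) ltac:(lra)) ltac:(lra) ltac:(lra) ltac:(lra)).
  assert (S2 := sigma2_increment_approx T g kappa e phi34 h K (b - h) h HK Hk ltac:(lra)
                  (HC2 h ltac:(lra) ltac:(lra)) ltac:(lra) ltac:(lra) ltac:(lra)).
  assert (S3 := sigma2_increment_approx T g kappa e phi34 (2 * h) K (b - h) (2 * h) HK Hk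
                  ltac:(lra) (HC2 (2 * h) ltac:(lra) ltac:(lra)) ltac:(lra) ltac:(lra) ltac:(lra)).
  replace (b - h + h) with b in S2 by ring.
  replace (b - h + 2 * h) with (b + h) in S3 by ring.
  rewrite <- Rpower_mult_distr in S3 by lra.
  rewrite (second_diff_polarization T K HK) by lra.
  pose proof (dilation_constant_bounds g Hg) as Hc.
  set (Y := Rpower 2 (2 * g)) in *. set (X := kappa ^ 2 * Rpower h (2 * g)) in *.
  assert (HX : 0 < X) by (apply Rmult_lt_0_compat; [apply pow_lt | apply Rpower_pos]; lra).
  replace (kappa ^ 2 * (Y * Rpower h (2 * g))) with (Y * X) in S3 by (unfold X; ring).
  replace (kappa ^ 2 * (4 - Y) * Rpower h (2 * g)) with (4 * X - Y * X) by (unfold X; ring).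
  replace (24 * kappa ^ 2 * e * Rpower h (2 * g)) with (24 * e * X) by (unfold X; ring).
  apply Rabs_le_inv in S1, S2, S3.
  assert (3 * e * (Y * X) <= 12 * e * X) by nra.
  apply Rabs_le. lra.
Qed.

Lemma boundary_term T g C d1 K h b B :
  is_covariance T K -> 0 < g -> c1_window T g C d1 K ->
  0 <= h <= b -> b + h <= B -> B < d1 -> b + h <= T ->
  0 <= second_diff K (b + h) b (b - h) <= 16 * C ^ 2 * Rpower B (2 * g).
Proof.
  intros HK Hg HC1 Hb HbB HBd HbT.
  pose proof (fun t Ht HtB => sigma2_origin_bound T g C d1 K t B HK Hg HC1 Ht HtB HBd) as Horig.
  split; [apply (second_diff_nonneg T K HK); lra |].
  eapply Rle_trans; [apply (second_diff_le_origin T K HK); lra |].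
  pose proof (Horig (b + h) ltac:(lra) ltac:(lra)). pose proof (Horig b ltac:(lra) ltac:(lra)).
  pose proof (Horig (b - h) ltac:(lra) ltac:(lra)). lra.
Qed.


Section OnePartition.

Variables (T g kappa C d1 d0 e : R) (K : R -> R -> R) (N K0 : nat).
Hypotheses (HT : 0 < T) (HK : is_covariance T K) (Hg : 0 < g < 1) (Hk : 0 < kappa)
  (He : 0 <= e <= 1) (HC1 : c1_window T g C d1 K) (HC2 : c2_window T g kappa phi34 e d0 K)
  (HN : (2 <= N)%nat) (HK0 : (1 <= K0)%nat).

Let h := T / INR N.
Let P := Rpower (INR N / T) (2 * g - 1).
Let u := Rpower h (2 * g).
Let c := 4 - Rpower 2 (2 * g).

Hypotheses (Hd0 : 2 * h < d0) (Hphi : phi34 (2 * h) <= (INR K0 - 1) * h)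
  (Hd1 : INR K0 * h < d1).

Lemma INR_N_ge2 : 2 <= INR N.
Proof. apply (le_INR 2); exact HN. Qed.

Lemma mesh_pos : 0 < h.
Proof. pose proof INR_N_ge2 as HNR. apply Rdiv_lt_0_compat; lra. Qed.

Lemma mesh_times_N : h * INR N = T.
Proof. pose proof INR_N_ge2 as HNR. unfold h; field; lra. Qed.

Lemma prefactor_mesh : P * u = h.
Proof. apply prefactor_scaling; [exact HT | lia]. Qed.

Lemma limit_term_bounds : 0 <= kappa ^ 2 * c * h <= 4 * kappa ^ 2 * h.
Proof.
  pose proof mesh_pos as Hh. pose proof (dilation_constant_bounds g Hg) as Hc. fold c in Hc.
  assert (Hk2 : 0 < kappa ^ 2) by (apply pow_lt; lra).
  split; [apply Rmult_le_pos; [apply Rmult_le_pos |] | apply Rmult_le_compat_r]; nra.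
Qed.

Definition scaled_term (k : nat) : R :=
  P * second_diff K (INR (S k) * T / INR N) (INR k * T / INR N) (INR (pred k) * T / INR N).

Lemma EV2_as_sum : EV2 T g K N = fold_right Rplus 0 (map scaled_term (seq 1 (N - 1))).
Proof. unfold scaled_term; rewrite fold_right_map_scale; reflexivity. Qed.

Lemma scaled_term_mesh k : (1 <= k)%nat ->
  scaled_term k = P * second_diff K (INR k * h + h) (INR k * h) (INR k * h - h).
Proof.
  pose proof INR_N_ge2 as HNR. intros Hk1. unfold scaled_term.
  rewrite partition_term by (lia || lra).
  reflexivity.
Qed.

Lemma scaled_bulk k : (K0 <= k)%nat -> (k + 1 <= N)%nat ->
  Rabs (scaled_term k - kappa ^ 2 * c * h) <= 24 * kappa ^ 2 * e * h.
Proof.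
  intros HK0k HkN. pose proof mesh_pos as Hh. pose proof mesh_times_N as HhN.
  assert (HP : 0 < P) by apply Rpower_pos.
  assert (HkR : INR K0 <= INR k) by (apply le_INR; lia).
  assert (HkNR : INR k + 1 <= INR N) by (rewrite <- S_INR; apply le_INR; lia).
  assert (HK0R : 1 <= INR K0) by (apply (le_INR 1); exact HK0).
  rewrite scaled_term_mesh by lia.
  replace (P * _ - kappa ^ 2 * c * h) with (P * (second_diff K (INR k * h + h) (INR k * h)
    (INR k * h - h) - kappa ^ 2 * c * u)) by (rewrite <- prefactor_mesh; ring).
  rewrite Rabs_mult, (Rabs_right P) by lra.
  replace (24 * kappa ^ 2 * e * h) with (P * (24 * kappa ^ 2 * e * u))
    by (rewrite <- prefactor_mesh; ring).
  apply Rmult_le_compat_l; [lra |].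
  apply (bulk_term T g kappa e d0 K h); try lra; try assumption; nra.
Qed.

Lemma scaled_boundary k : (1 <= k)%nat -> (k < K0)%nat -> (k + 1 <= N)%nat ->
  Rabs (scaled_term k - kappa ^ 2 * c * h) <= 16 * C ^ 2 * INR K0 ^ 2 * h + 4 * kappa ^ 2 * h.
Proof.
  intros Hk1 HkK0 HkN. pose proof mesh_pos as Hh. pose proof mesh_times_N as HhN.
  pose proof limit_term_bounds as Hlim.
  assert (HP : 0 < P) by apply Rpower_pos.
  assert (HkR : 1 <= INR k) by (apply (le_INR 1); lia).
  assert (HkK : INR k + 1 <= INR K0) by (rewrite <- S_INR; apply le_INR; lia).
  assert (HkNR : INR k + 1 <= INR N) by (rewrite <- S_INR; apply le_INR; lia).
  assert (HK0R : 1 <= INR K0) by (apply (le_INR 1); exact HK0).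
  rewrite scaled_term_mesh by lia.
  assert (Hd := boundary_term T g C d1 K h (INR k * h) (INR K0 * h) HK ltac:(lra) HC1
                  ltac:(nra) ltac:(nra) Hd1 ltac:(nra)).
  rewrite <- Rpower_mult_distr in Hd by lra. fold u in Hd.
  assert (Hbound : P * (16 * C ^ 2 * (Rpower (INR K0) (2 * g) * u))
                     <= 16 * C ^ 2 * INR K0 ^ 2 * h).
  { replace (P * (16 * C ^ 2 * (Rpower (INR K0) (2 * g) * u)))
      with (16 * C ^ 2 * Rpower (INR K0) (2 * g) * h) by (rewrite <- prefactor_mesh; ring).
    apply Rmult_le_compat_r; [lra |].
    apply Rmult_le_compat_l; [pose proof (pow2_ge_0 C); lra | exact (Rpower_le_sq _ g HK0R Hg)]. }
  assert (0 <= P * second_diff K (INR k * h + h) (INR k * h) (INR k * h - h)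
            <= P * (16 * C ^ 2 * (Rpower (INR K0) (2 * g) * u)))
    by (split; [apply Rmult_le_pos | apply Rmult_le_compat_l]; lra).
  apply Rabs_le. lra.
Qed.

Lemma EV2_estimate :
  Rabs (EV2 T g K N - kappa ^ 2 * c * T)
    <= 24 * kappa ^ 2 * e * T + (16 * C ^ 2 + 8 * kappa ^ 2) * (h * INR K0 ^ 3).
Proof.
  pose proof INR_N_ge2 as HNR. pose proof mesh_pos as Hh. pose proof mesh_times_N as HhN.
  pose proof limit_term_bounds as Hlim.
  assert (Hk2 : 0 < kappa ^ 2) by (apply pow_lt; lra).
  assert (HK0R : 1 <= INR K0) by (apply (le_INR 1); exact HK0).
  assert (HK0C : 0 <= C ^ 2 * INR K0 ^ 2 * h)
    by (apply Rmult_le_pos; [apply Rmult_le_pos; [apply pow2_ge_0 | apply pow_le] |]; lra).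
  assert (Hsum := sum_deviation_bound scaled_term (kappa ^ 2 * c * h)
                    (24 * kappa ^ 2 * e * h) (16 * C ^ 2 * INR K0 ^ 2 * h + 4 * kappa ^ 2 * h) K0
                    ltac:(apply Rmult_le_pos; nra) ltac:(nra) (N - 1) 1
                    ltac:(intros; apply scaled_bulk; lia)
                    ltac:(intros; apply scaled_boundary; lia)).
  rewrite !minus_INR in Hsum by lia. simpl INR in Hsum.
  rewrite EV2_as_sum, <- mesh_times_N.
  replace (fold_right Rplus 0 (map scaled_term (seq 1 (N - 1))) - kappa ^ 2 * c * (h * INR N))
    with ((fold_right Rplus 0 (map scaled_term (seq 1 (N - 1))) - (INR N - 1) * (kappa ^ 2 * c * h))
          - kappa ^ 2 * c * h) by ring.
  eapply Rle_trans; [apply Rabs_triang |].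
  rewrite Rabs_Ropp, (Rabs_right (kappa ^ 2 * c * h)) by lra.
  assert (HK3 : INR K0 <= INR K0 ^ 3) by (simpl; nra).
  assert ((INR N - 1) * (24 * kappa ^ 2 * e * h) <= 24 * kappa ^ 2 * e * (h * INR N)) by nra.
  assert (kappa ^ 2 * h * INR K0 <= kappa ^ 2 * h * INR K0 ^ 3)
    by (apply Rmult_le_compat_l; [nra | exact HK3]).
  replace (INR K0 ^ 3) with (INR K0 ^ 2 * INR K0) in * by ring. nra.
Qed.

End OnePartition.

Lemma nat_between x : 0 < x -> exists n : nat, x <= INR n <= x + 1.
Proof.
  intros Hx. destruct (archimed x) as [H1 H2].
  exists (Z.to_nat (up x)). rewrite INR_IZR_INZ, Z2Nat.id by (apply le_IZR; lra). lra.
Qed.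

(* With r = root4 (2h) one may take K0 ~ 2/r: then phi34(2h) = r^3 <= (K0 - 1) h,
   the boundary region [0, K0 h] has length O(r), and h K0^3 = O(r). *)
Lemma cutoff_exists h : 0 < h -> 2 * h <= 1 ->
  exists K0 : nat, (1 <= K0)%nat /\ phi34 (2 * h) <= (INR K0 - 1) * h /\
    INR K0 * h <= 2 * root4 (2 * h) /\ h * INR K0 ^ 3 <= 32 * root4 (2 * h).
Proof.
  intros Hh H2h. set (r := root4 (2 * h)).
  assert (Hr : 0 < r) by (apply root4_pos; lra).
  assert (Hr4 : r ^ 4 = 2 * h) by (apply root4_pow4; lra).
  assert (Hphi : phi34 (2 * h) = r ^ 3) by reflexivity.
  assert (Hr1 : r <= 1).
  { replace 1 with (root4 1) by (unfold root4; rewrite !sqrt_1; reflexivity).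
    apply root4_le; exact H2h. }
  rewrite Hphi. clearbody r.
  destruct (nat_between (2 / r + 1)) as [K0 HK0].
  { assert (0 < 2 / r) by (apply Rdiv_lt_0_compat; lra). lra. }
  assert (HK0r : 2 + r <= INR K0 * r <= 2 + 2 * r).
  { replace (2 + r) with ((2 / r + 1) * r) by (field; lra).
    replace (2 + 2 * r) with ((2 / r + 1 + 1) * r) by (field; lra).
    split; apply Rmult_le_compat_r; lra. }
  exists K0. split; [| split; [| split]].
  - apply INR_le. simpl. assert (0 <= INR K0 * r - r) by lra. nra.
  - replace h with (r ^ 4 / 2) by lra.
    replace ((INR K0 - 1) * (r ^ 4 / 2)) with ((INR K0 * r - r) * r ^ 3 / 2) by field.
    assert (0 <= r ^ 3) by (apply pow_le; lra). nra.
  - replace h with (r ^ 4 / 2) by lra.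
    replace (INR K0 * (r ^ 4 / 2)) with (INR K0 * r * r ^ 3 / 2) by field.
    assert (0 <= r ^ 3 <= r) by (split; [apply pow_le; lra | simpl; nra]).
    assert (INR K0 * r * r ^ 3 <= 4 * r ^ 3) by (apply Rmult_le_compat_r; lra). lra.
  - replace h with (r ^ 4 / 2) by lra.
    replace (r ^ 4 / 2 * INR K0 ^ 3) with (r * (INR K0 * r) ^ 3 / 2) by field.
    assert ((INR K0 * r) ^ 3 <= 4 ^ 3) by (apply pow_incr; lra). nra.
Qed.


Lemma pow4_le_self r : 0 <= r <= 1 -> r ^ 4 <= r.
Proof.
  intros Hr. assert (0 <= r ^ 3 <= 1)
    by (split; [apply pow_le; lra | replace 1 with (1 ^ 3) by ring; apply pow_incr; lra]).
  replace (r ^ 4) with (r * r ^ 3) by ring. nra.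
Qed.

Lemma EV2_fine_estimate T g kappa C d1 d0 e K N :
  0 < T -> is_covariance T K -> 0 < g < 1 -> 0 < kappa -> 0 <= e <= 1 ->
  c1_window T g C d1 K -> c2_window T g kappa phi34 e d0 K -> (2 <= N)%nat ->
  root4 (2 * (T / INR N)) < Rmin 1 (Rmin d0 (d1 / 2)) ->
  Rabs (EV2 T g K N - kappa ^ 2 * (4 - Rpower 2 (2 * g)) * T)
    <= 24 * kappa ^ 2 * e * T + 32 * (16 * C ^ 2 + 8 * kappa ^ 2) * root4 (2 * (T / INR N)).
Proof.
  intros HT HK Hg Hk He HC1 HC2 HN Hr.
  set (h := T / INR N) in *. set (r := root4 (2 * h)) in *.
  assert (Hh : 0 < h) by (apply Rdiv_lt_0_compat; [| apply (lt_INR 0); lia]; lra).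
  apply Rmin_Rgt_l in Hr as [Hr1 Hr']. apply Rmin_Rgt_l in Hr' as [Hrd0 Hrd1].
  assert (Hr0 : 0 <= r) by apply root4_nonneg.
  assert (Hr4 : r ^ 4 = 2 * h) by (apply root4_pow4; lra).
  assert (H2h : 2 * h <= r) by (pose proof (pow4_le_self r ltac:(lra)); lra).
  destruct (cutoff_exists h Hh ltac:(lra)) as [K0 [HK0 [Hphi [HK0h HK03]]]].
  fold r in HK0h, HK03.
  eapply Rle_trans.
  { apply (EV2_estimate T g kappa C d1 d0 e K N K0); try assumption; fold h; lra. }
  assert (0 < 16 * C ^ 2 + 8 * kappa ^ 2)
    by (pose proof (pow2_ge_0 C); pose proof (pow_lt kappa 2 Hk); lra).
  assert ((16 * C ^ 2 + 8 * kappa ^ 2) * (h * INR K0 ^ 3)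
          <= (16 * C ^ 2 + 8 * kappa ^ 2) * (32 * r)) by (apply Rmult_le_compat_l; lra).
  fold h. lra.
Qed.

Lemma EV2_close T g kappa K :
  0 < T -> is_covariance T K -> 0 < g < 1 -> 0 < kappa ->
  cond_C1 T g K -> cond_C2 T g kappa K ->
  forall eps, eps > 0 -> exists delta, delta > 0 /\
    forall N, (2 <= N)%nat -> T / INR N < delta ->
      Rabs (EV2 T g K N - kappa ^ 2 * (4 - Rpower 2 (2 * g)) * T) < eps.
Proof.
  intros HT HK Hg Hk [C [d1 [Hd1 HC1]]] HC2 eps Heps.
  assert (Hk2 : 0 < kappa ^ 2) by (apply pow_lt; lra).
  (* Relative accuracy demanded from (C2). *)
  set (e := Rmin 1 (eps / (48 * kappa ^ 2 * T))).
  assert (He : 0 < e <= 1) by (split; [apply Rmin_pos; [lra | apply Rdiv_lt_0_compat; nra]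
                                      | apply Rmin_l]).
  assert (HeT : 24 * kappa ^ 2 * e * T <= eps / 2).
  { assert (e <= eps / (48 * kappa ^ 2 * T)) by apply Rmin_r.
    replace (eps / 2) with (24 * kappa ^ 2 * T * (eps / (48 * kappa ^ 2 * T))) by (field; nra).
    replace (24 * kappa ^ 2 * e * T) with (24 * kappa ^ 2 * T * e) by ring.
    apply Rmult_le_compat_l; nra. }
  destruct (HC2 phi34 (phi34_in_Psi T) e (proj1 He)) as [d0 [Hd0 HC2e]].
  (* Smallness demanded from root4 (2 h), which controls the boundary terms. *)
  set (B := 16 * C ^ 2 + 8 * kappa ^ 2).
  assert (HB : 0 < B) by (unfold B; pose proof (pow2_ge_0 C); lra).
  set (rho := Rmin (Rmin 1 (Rmin d0 (d1 / 2))) (eps / (64 * B))).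
  assert (Hrho : 0 < rho).
  { apply Rmin_pos; [apply Rmin_pos; [| apply Rmin_pos] | apply Rdiv_lt_0_compat]; lra. }
  exists (rho ^ 4 / 2). split; [apply Rdiv_lt_0_compat; [apply pow_lt |]; lra |].
  intros N HN Hfine.
  assert (Hpos : 0 < T / INR N) by (apply Rdiv_lt_0_compat; [| apply (lt_INR 0); lia]; lra).
  assert (Hr : rho > root4 (2 * (T / INR N))) by (apply root4_lt; lra).
  apply Rmin_Rgt_l in Hr as [Hr Hreps].
  pose proof (EV2_fine_estimate T g kappa C d1 d0 e K N HT HK Hg Hk ltac:(lra) HC1 HC2e HN Hr)
    as Hest. fold B in Hest.
  assert (32 * B * root4 (2 * (T / INR N)) < eps / 2).
  { replace (eps / 2) with (32 * B * (eps / (64 * B))) by (field; lra).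
    apply Rmult_lt_compat_l; lra. }
  lra.
Qed.

Lemma strict_incr_ge_id (N : nat -> nat) :
  (forall n, (N n < N (S n))%nat) -> forall n, (n <= N n)%nat.
Proof. intros H n; induction n; [lia|]. specialize (H n). lia. Qed.

Theorem corollary1 (T gamma kappa : R) (N : nat -> nat) (K : R -> R -> R) :
  0 < T ->
  (forall n, (N n < N (S n))%nat) ->
  is_covariance T K ->
  0 < gamma < 1 -> 0 < kappa ->
  cond_C1 T gamma K ->
  cond_C2 T gamma kappa K ->
  Un_cv (fun n => EV2 T gamma K (N n))
        (kappa ^ 2 * (4 - Rpower 2 (2 * gamma)) * T).
Proof.
  intros HT HN HK Hg Hk HC1 HC2 eps Heps.
  destruct (EV2_close T gamma kappa K HT HK Hg Hk HC1 HC2 eps Heps) as [delta [Hdelta Hclose]].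
  (* Once N n > T / delta, the mesh T / N n is below delta. *)
  destruct (INR_unbounded (T / delta)) as [M HM].
  exists (max M 2). intros n Hn.
  assert (HNn : (max M 2 <= N n)%nat) by (pose proof (strict_incr_ge_id N HN n); lia).
  apply Hclose; [lia |].
  assert (HMN : INR M <= INR (N n)) by (apply le_INR; lia).
  assert (HN0 : 0 < INR (N n)) by (apply (lt_INR 0); lia).
  apply (Rmult_lt_reg_r (INR (N n) / delta)); [apply Rdiv_lt_0_compat; lra |].
  replace (T / INR (N n) * (INR (N n) / delta)) with (T / delta) by (field; lra).
  replace (delta * (INR (N n) / delta)) with (INR (N n)) by (field; lra). lra.
Qed.
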